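(* Let $n \ge 2$. Amongst all connected bipartite graphs on $n$ vertices, the maximum value of the normalized Graovac-Ghorbani index $\mathrm{NGG}$, and also the maximum value of the Graovac-Ghorbani index $\mathrm{GG}$, is attained by the complete bipartite graph $K_{\lfloor n/2\rfloor, \lceil n/2\rceil}$, and by no other such graph.
   Context: All graphs are finite, simple, undirected and connected. For an edge $uv$ of a graph $G$, let $n_u = |\{w \in V(G) : d(w,u) < d(w,v)\}|$ and $n_v = |\{w \in V(G) : d(w,v) < d(w,u)\}|$, where $d$ is the shortest-path distance. The Graovac-Ghorbani index is $\mathrm{GG}(G) = \sum_{uv \in E(G)} \sqrt{\frac{n_u + n_v - 2}{n_u n_v}}$ and the normalized Graovac-Ghorbani index is $\mathrm{NGG}(G) = \sum_{uv \in E(G)} \frac{1}{\sqrt{n_u n_v}}$. *)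

From HB Require Import structures.
From mathcomp Require Import all_boot all_order all_algebra all_fingroup.
Set Implicit Arguments. Unset Strict Implicit. Unset Printing Implicit Defensive.
Import Order.TTheory GRing.Theory Num.Theory.

Definition simple_graph (n : nat) (e : rel 'I_n) : Prop :=
  (forall u v, e u v = e v u) /\ (forall u, ~~ e u u).

Definition connected_graph (n : nat) (e : rel 'I_n) : Prop :=
  forall u v, connect e u v.

Definition bipartite (n : nat) (e : rel 'I_n) : Prop :=
  exists A : {set 'I_n}, forall u v, e u v -> (u \in A) != (v \in A).

Fixpoint walk (n : nat) (e : rel 'I_n) (k : nat) (u v : 'I_n) : bool :=
  match k with
  | 0 => u == v
  | k'.+1 => [exists w, e u w && walk e k' w v]
  end.

(* shortest-path distance: least k < n with a k-walk from u to v
   (equals n if v is unreachable, which never happens for connected graphs) *)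
Definition dist (n : nat) (e : rel 'I_n) (u v : 'I_n) : nat :=
  find (fun k => walk e k u v) (iota 0 n).

Definition nclose (n : nat) (e : rel 'I_n) (u v : 'I_n) : nat :=
  #|[set w | dist e w u < dist e w v]|.

Local Open Scope ring_scope.

Definition GG (R : rcfType) (n : nat) (e : rel 'I_n) : R :=
  \sum_(u : 'I_n) \sum_(v : 'I_n | (u < v)%N && e u v)
     Num.sqrt (((nclose e u v)%:R + (nclose e v u)%:R - 2)
               / ((nclose e u v)%:R * (nclose e v u)%:R)).

Definition NGG (R : rcfType) (n : nat) (e : rel 'I_n) : R :=
  \sum_(u : 'I_n) \sum_(v : 'I_n | (u < v)%N && e u v)
     (Num.sqrt ((nclose e u v)%:R * (nclose e v u)%:R))^-1.

(* complete bipartite graph K_{floor(n/2), ceil(n/2)} on 'I_n: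
   parts {i | i < n/2} (size floor(n/2)) and its complement *)
Definition Kbip (n : nat) : rel 'I_n :=
  fun u v => (u < n./2)%N != (v < n./2)%N.

Arguments Kbip n : clear implicits.

Definition graph_iso (n : nat) (e f : rel 'I_n) : Prop :=
  exists p : {perm 'I_n}, forall u v, e u v = f (p u) (p v).

From HB Require Import structures.
From mathcomp Require Import all_boot all_order all_algebra all_fingroup.
From mathcomp Require Import zify ring.
Import Order.TTheory GRing.Theory Num.Theory.
Set Implicit Arguments. Unset Strict Implicit. Unset Printing Implicit Defensive.

(* For an edge uv of a connected bipartite graph, the distances from any vertex
   to u and to v have different parities, so n_u + n_v = n; moreover n_u is at
   least deg u (u and its neighbours other than v are closer to u). Hence
     sum_uv 1/(n_u n_v) = 1/n sum_uv (1/n_u + 1/n_v)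
                       <= 1/n sum_u sum_(v~u) 1/deg u <= 1,
   and Cauchy-Schwarz gives NGG <= sqrt m, where the number m of edges is at
   most |A| (n - |A|) <= floor(n/2) ceil(n/2) for a side A of the bipartition.
   In the complete bipartite graph n_u = deg u, so every edge contributes
   (floor(n/2) ceil(n/2))^(-1/2) and the bound is attained; conversely equality
   forces m = floor(n/2) ceil(n/2), i.e. a complete bipartite graph with
   balanced sides. Finally GG = sqrt(n-2) NGG for bipartite graphs, which
   transfers everything to GG, except for n = 2 where K_{1,1} is the only
   connected graph. *)

Lemma mul_subn_halfE k n : k <= n./2 ->
  k * (n - k) + (n./2 - k) * (odd n + (n./2 - k)) = n./2 * (n - n./2).
Proof.
move/subnKC; move: (n./2 - k) (odd_double_half n) => d.
move: (odd n) (n./2) => b h <- <-; rewrite -addnn.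
have -> : b + (k + d + (k + d)) - k = k + d + b + d by lia.
have -> : b + (k + d + (k + d)) - (k + d) = k + d + b by lia.
ring.
Qed.

Lemma mul_subn_le_half k n : k <= n -> k * (n - k) <= n./2 * (n - n./2).
Proof.
move=> kn; wlog kh : k kn / k <= n./2 => [wlog_kh|].
  have [|hk] := leqP k n./2; first exact: wlog_kh.
  rewrite -{1}(subKn kn) mulnC; apply: wlog_kh; first exact: leq_subr.
  by have := odd_double_half n; lia.
by rewrite -(mul_subn_halfE kh) leq_addr.
Qed.

Lemma mul_subn_eq_half k n : k <= n -> k * (n - k) = n./2 * (n - n./2) ->
  k = n./2 \/ k = n - n./2.
Proof.
move=> kn; wlog kh : k kn / k <= n./2 => [wlog_kh|].
  have [|hk] := leqP k n./2; first exact: wlog_kh.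
  rewrite -{1}(subKn kn) mulnC => /wlog_kh.
  by have := odd_double_half n; lia.
move=> prod_eq; have := mul_subn_halfE kh.
rewrite -prod_eq -[X in _ = X]addn0 => /addnI /eqP.
by rewrite muln_eq0; lia.
Qed.

Lemma card_ltn_ord m n : m <= n -> #|[set i : 'I_n | i < m]| = m.
Proof.
move=> le_mn; have -> : [set i : 'I_n | i < m] = widen_ord le_mn @: [set: 'I_m].
  apply/setP=> i; rewrite inE.
  apply/idP/imsetP => [lt_im|[j _ ->]]; last by rewrite /= ltn_ord.
  by exists (Ordinal lt_im); rewrite ?inE //; apply: val_inj.
by rewrite card_imset ?cardsT ?card_ord // => x y /(congr1 val) /= /val_inj.
Qed.

Lemma cardsC_ord n (A : {set 'I_n}) : #|~: A| = n - #|A|.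
Proof. by rewrite cardsCs setCK card_ord. Qed.

Local Open Scope ring_scope.

Lemma sqr_sum_le (R : realDomainType) (I : finType) (S : {pred I}) (x : I -> R) :
  (\sum_(i in S) x i) ^+ 2 <= #|S|%:R * \sum_(i in S) x i ^+ 2.
Proof.
have amgm i j : x i * x j *+ 2 <= x i ^+ 2 + x j ^+ 2.
  by rewrite -subr_ge0 (_ : _ - _ = (x i - x j) ^+ 2) ?sqr_ge0 //; ring.
rewrite -(ler_pMn2r (isT : (0 < 2)%N)).
have -> : (\sum_(i in S) x i) ^+ 2 *+ 2 = \sum_(i in S) \sum_(j in S) x i * x j *+ 2.
  by rewrite expr2 mulr_suml -sumrMnl; apply: eq_bigr => i _; rewrite mulr_sumr sumrMnl.
have -> : (#|S|%:R * \sum_(i in S) x i ^+ 2) *+ 2 =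
          \sum_(i in S) \sum_(j in S) (x i ^+ 2 + x j ^+ 2).
  rewrite (eq_bigr _ (fun i _ => big_split _ _ _ _ _)) big_split /= sumr_const.
  by rewrite (eq_bigr _ (fun i _ => sumr_const _ _)) sumrMnl mulr_natl mulr2n.
exact: ler_sum (fun i _ => ler_sum _ (fun j _ => amgm i j)).
Qed.

Lemma mulVn_le1 (R : numFieldType) (k : nat) : (k%:R)^-1 * k%:R <= 1 :> R.
Proof. by have [->|k_gt0] := posnP k; rewrite ?mulr0 // mulVf ?pnatr_eq0 -?lt0n. Qed.

Local Close Scope ring_scope.

Definition deg n (e : rel 'I_n) (u : 'I_n) : nat := #|[set v | e u v]|.

Definition edges n (e : rel 'I_n) : {set 'I_n * 'I_n} :=
  [set p : 'I_n * 'I_n | (p.1 < p.2)%N && e p.1 p.2].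

Definition cbip n (A : {set 'I_n}) : rel 'I_n := fun u v => (u \in A) != (v \in A).

Section Distance.

Variables (n : nat) (e : rel 'I_n).

Lemma walk_last_path w p : path e w p -> walk e (size p) w (last w p).
Proof.
elim: p w => [|x p IHp] w /=; first by rewrite eqxx.
by case/andP=> ewx /IHp wx; apply/existsP; exists x; rewrite ewx.
Qed.

Lemma connect_walk w u : connect e w u -> exists2 k, k < n & walk e k w u.
Proof.
case/connectP=> p0 /shortenP[p wp uniq_wp _] ->; exists (size p).
  by have := max_card (mem (w :: p)); rewrite (card_uniqP uniq_wp) card_ord.
exact: walk_last_path.
Qed.

Lemma walk_dist w u : connect e w u -> walk e (dist e w u) w u.
Proof.
case/connect_walk=> k kn wk.
have has_walk : has (fun k => walk e k w u) (iota 0 n).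
  by apply/hasP; exists k; rewrite ?mem_iota.
have := nth_find 0 has_walk; rewrite has_find size_iota in has_walk.
by rewrite nth_iota.
Qed.

Lemma dist_le k w u : k < n -> walk e k w u -> dist e w u <= k.
Proof.
move=> kn wk; rewrite leqNgt; apply/negP=> /(before_find 0).
by rewrite nth_iota ?wk.
Qed.

Lemma dist_eq0 w u : connect e w u -> (dist e w u == 0) = (w == u).
Proof.
move=> wu; apply/idP/idP => [/eqP d0|/eqP->]; first by have := walk_dist wu; rewrite d0.
by rewrite -leqn0 dist_le //= (leq_ltn_trans _ (ltn_ord u)).
Qed.

Lemma dist_eq1 w u : irreflexive e -> connect e w u -> (dist e w u == 1) = e w u.
Proof.
move=> e_irr wu; apply/idP/idP => [/eqP d1|ewu].
  by have := walk_dist wu; rewrite d1 => /existsP[x /andP[ewx /eqP <-]].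
have neq_wu : w != u by apply: contraTneq ewu => ->; rewrite e_irr.
have : dist e w u <= 1.
  apply: dist_le; last by apply/existsP; exists u; rewrite ewu /=.
  by move: neq_wu; rewrite -val_eqE /=; have := ltn_ord w; have := ltn_ord u; lia.
by rewrite leq_eqVlt ltnS leqn0 dist_eq0 // (negPf neq_wu) orbF.
Qed.

End Distance.

Lemma sum_edges (R : nmodType) n (e : rel 'I_n) (F : 'I_n -> 'I_n -> R) :
  (\sum_(u : 'I_n) \sum_(v : 'I_n | (u < v)%N && e u v) F u v =
   \sum_(p in edges e) F p.1 p.2)%R.
Proof. by rewrite pair_big_dep; apply: eq_bigl => p; rewrite inE. Qed.

Section Handshake.

Variables (n : nat) (e : rel 'I_n).
Hypotheses (e_sym : symmetric e) (e_irr : irreflexive e).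

Lemma sum_adj (R : nmodType) (F : 'I_n -> 'I_n -> R) :
  (\sum_(u : 'I_n) \sum_(v | e u v) F u v =
   \sum_(p in edges e) (F p.1 p.2 + F p.2 p.1))%R.
Proof.
rewrite pair_big_dep (bigID (fun p : 'I_n * 'I_n => (p.1 < p.2)%N)) big_split /=.
congr (_ + _)%R; first by apply: eq_bigl => p; rewrite inE andbC.
rewrite (reindex_inj (can_inj swap_pairK)) /=; apply: eq_bigl => -[u v] /=.
rewrite inE e_sym /=.
by case: (ltngtP u v) => [_|_|/val_inj->]; rewrite ?e_irr ?andbT ?andbF.
Qed.

Lemma card_edges_deg : (2 * #|edges e| = \sum_u deg e u)%N.
Proof.
have := sum_adj (fun _ _ => 1%N); rewrite sum_nat_const mulnC => <-.
by apply: eq_bigr => u _; rewrite /deg -sum1_card; apply: eq_bigl => v; rewrite inE.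
Qed.

End Handshake.

Section CompleteBipartite.

Variables (n : nat) (A : {set 'I_n}) (e : rel 'I_n).
Hypothesis eA : e =2 cbip A.

Lemma cbip_sym : symmetric e.
Proof. by move=> u v; rewrite !eA /cbip eq_sym. Qed.

Lemma cbip_irr : irreflexive e.
Proof. by move=> u; rewrite eA /cbip eqxx. Qed.

Lemma cbipC : e =2 cbip (~: A).
Proof. by move=> u v; rewrite eA /cbip !inE; case: (u \in A); case: (v \in A). Qed.

Lemma deg_cbip u : deg e u = if u \in A then #|~: A| else #|A|.
Proof.
by case: ifP => uA; apply: eq_card => v; rewrite !inE eA /cbip uA; case: (v \in A).
Qed.

Lemma sum_deg_cbip : (\sum_u deg e u = 2 * (#|A| * #|~: A|))%N.
Proof.
rewrite (bigID (mem A)) /=.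
rewrite (eq_bigr (fun=> #|~: A|)) => [|u uA]; last by rewrite deg_cbip uA.
rewrite [X in _ + X](eq_bigr (fun=> #|A|)) => [|u /negPf uA]; last by rewrite deg_cbip uA.
rewrite [X in _ + X](eq_bigl (mem (~: A))) => [|u]; last by rewrite !inE.
by rewrite !sum_nat_const mulnC addnn mul2n.
Qed.

Lemma connected_cbip a b : a \in A -> b \notin A -> connected_graph e.
Proof.
move=> aA bA.
have to_a u : connect e u a.
  case uA: (u \in A); last by apply: connect1; rewrite eA /cbip uA aA.
  by apply: (connect_trans (y := b)); apply: connect1; rewrite eA /cbip ?uA ?aA (negPf bA).
move=> u v; apply: connect_trans (to_a u) _.
by rewrite (sym_connect_sym cbip_sym) to_a.
Qed.

End CompleteBipartite.

Section Bipartite.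

Variables (n : nat) (e : rel 'I_n) (A : {set 'I_n}).
Hypotheses (e_sym : symmetric e) (e_irr : irreflexive e).
Hypothesis e_conn : connected_graph e.
Hypothesis e_bip : forall u v, e u v -> (u \in A) != (v \in A).

Lemma walk_parity k w u : walk e k w u -> ((w \in A) != (u \in A)) = odd k.
Proof.
elim: k w => [|k IHk] w /=; first by move/eqP->; rewrite eqxx.
case/existsP=> x /andP[/e_bip ewx /IHk <-]; move: ewx.
by case: (w \in A); case: (x \in A); case: (u \in A).
Qed.

Lemma dist_edge_neq w u v : e u v -> dist e w u != dist e w v.
Proof.
move=> /e_bip euv; apply: contra_neq euv => same_dist.
have := walk_parity (walk_dist (e_conn w u)).
rewrite same_dist -(walk_parity (walk_dist (e_conn w v))).
by case: (w \in A); case: (u \in A); case: (v \in A).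
Qed.

Lemma nclose_addC u v : e u v -> (nclose e u v + nclose e v u)%N = n.
Proof.
move=> euv; rewrite /nclose -cardsUI.
have -> : [set w | dist e w u < dist e w v] :&: [set w | dist e w v < dist e w u] = set0.
  by apply/setP=> w; rewrite !inE; case: ltngtP.
have -> : [set w | dist e w u < dist e w v] :|: [set w | dist e w v < dist e w u] = setT.
  by apply/setP=> w; rewrite !inE -neq_ltn dist_edge_neq.
by rewrite cards0 addn0 cardsT card_ord.
Qed.

Lemma deg_le_nclose u v : e u v -> (deg e u <= nclose e u v)%N.
Proof.
move=> euv; have neq_uv : u != v by apply: contraTneq euv => ->; rewrite e_irr.
have closer_u : u |: ([set x | e u x] :\ v) \subset [set w | dist e w u < dist e w v].
  apply/subsetP=> x; rewrite !inE => /predU1P[->|/andP[neq_xv eux]].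
    have /eqP-> : dist e u u == 0 by rewrite dist_eq0.
    by rewrite lt0n dist_eq0.
  have dxu : dist e x u = 1 by apply/eqP; rewrite dist_eq1 // e_sym.
  rewrite dxu ltn_neqAle lt0n dist_eq0 // neq_xv andbT -dxu.
  exact: dist_edge_neq.
have := subset_leq_card closer_u.
by rewrite cardsU1 !inE e_irr andbF /= /deg (cardsD1 v [set x | e u x]) inE euv.
Qed.

Lemma deg_le_cbip u : (deg e u <= deg (cbip A) u)%N.
Proof.
by apply/subset_leq_card/subsetP=> v; rewrite !inE /cbip => /e_bip.
Qed.

Lemma card_edges_le : (#|edges e| <= #|A| * #|~: A|)%N.
Proof.
rewrite -(leq_pmul2l (isT : 0 < 2)%N) card_edges_deg //.
rewrite -(@sum_deg_cbip _ A (cbip A)) //; exact: leq_sum (fun u _ => deg_le_cbip u).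
Qed.

Lemma card_edges_eq : #|edges e| = (#|A| * #|~: A|)%N -> e =2 cbip A.
Proof.
move=> card_e u v.
have : (\sum_w (deg (cbip A) w - deg e w) == 0)%N.
  rewrite sumnB => [|w _]; last exact: deg_le_cbip.
  by rewrite (@sum_deg_cbip _ A (cbip A)) // -card_e -card_edges_deg // subnn.
rewrite sum_nat_eq0 => /forallP/(_ u) /=; rewrite subn_eq0 => deg_ge.
have : [set x | e u x] == [set x | cbip A u x].
  by rewrite eqEcard deg_ge andbT; apply/subsetP=> x; rewrite !inE /cbip => /e_bip.
by move/eqP/setP/(_ v); rewrite !inE.
Qed.

Local Open Scope ring_scope.

Lemma sum_inv_nclose_le1 (R : realFieldType) :
  \sum_(p in edges e) ((nclose e p.1 p.2)%:R * (nclose e p.2 p.1)%:R)^-1 <= 1 :> R.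
Proof.
pose a u v : R := (nclose e u v)%:R.
have deg_gt0 u v : e u v -> (0 < deg e u)%N.
  by move=> euv; apply/card_gt0P; exists v; rewrite inE.
have a_gt0 u v : e u v -> 0 < a u v.
  by move=> euv; rewrite /a ltr0n; exact: leq_trans (deg_gt0 _ _ euv) (deg_le_nclose euv).
have split_inv p : p \in edges e ->
    (a p.1 p.2 * a p.2 p.1)^-1 = n%:R^-1 * ((a p.1 p.2)^-1 + (a p.2 p.1)^-1).
  rewrite inE => /andP[_ euv]; have evu : e p.2 p.1 by rewrite e_sym.
  have -> : n%:R = a p.1 p.2 + a p.2 p.1 by rewrite -natrD nclose_addC.
  by field; rewrite ?gt_eqF ?addr_gt0 ?a_gt0.
have adj_le1 u : \sum_(v | e u v) (a u v)^-1 <= 1.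
  have sum_deg_inv : \sum_(v | e u v) (deg e u)%:R^-1 <= 1 :> R.
    rewrite (eq_bigl (fun v => v \in [set v | e u v])) => [|v]; last by rewrite inE.
    by rewrite sumr_const -[X in X <= _]mulr_natr mulVn_le1.
  apply: le_trans sum_deg_inv; apply: ler_sum => v euv.
  have le_deg : (deg e u)%:R <= a u v by rewrite ler_nat deg_le_nclose.
  by rewrite lef_pV2 ?posrE ?a_gt0 ?ltr0n ?(deg_gt0 _ _ euv).
rewrite (eq_bigr _ split_inv) -mulr_sumr -(sum_adj e_sym e_irr (fun u v => (a u v)^-1)).
have n_inv_ge0 : 0 <= n%:R^-1 :> R by rewrite invr_ge0.
apply: le_trans (ler_wpM2l n_inv_ge0 (ler_sum _ (fun u _ => adj_le1 u))) _.
by rewrite sumr_const card_ord mulVn_le1.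
Qed.

Lemma NGG_le_sqrt_edges (R : rcfType) : NGG R e <= Num.sqrt #|edges e|%:R.
Proof.
have NGG_ge0 : 0 <= NGG R e.
  by apply: sumr_ge0 => u _; apply: sumr_ge0 => v _; rewrite invr_ge0 sqrtr_ge0.
rewrite -(ger0_norm NGG_ge0) -sqrtr_sqr ler_sqrt ?mulr_ge0 ?ler0n //.
rewrite /NGG sum_edges; apply: le_trans (sqr_sum_le _ _) _.
rewrite -[X in _ <= X]mulr1 ler_wpM2l ?ler0n //.
rewrite (eq_bigr (fun p => ((nclose e p.1 p.2)%:R * (nclose e p.2 p.1)%:R)^-1)).
  exact: sum_inv_nclose_le1.
by move=> p _; rewrite exprVn sqr_sqrtr // mulr_ge0.
Qed.

Lemma GG_NGG (R : rcfType) : GG R e = Num.sqrt (n%:R - 2) * NGG R e.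
Proof.
rewrite /GG /NGG mulr_sumr; apply: eq_bigr => u _; rewrite mulr_sumr.
apply: eq_bigr => v /andP[_ euv]; rewrite -natrD (nclose_addC euv).
rewrite [X in Num.sqrt X]mulrC [LHS]sqrtrM ?invr_ge0 ?mulr_ge0 ?ler0n //.
by rewrite sqrtrV ?mulr_ge0 ?ler0n // mulrC.
Qed.

End Bipartite.

Section CompleteBipartiteIndices.

Variables (n : nat) (A : {set 'I_n}) (e : rel 'I_n).
Hypothesis eA : e =2 cbip A.

Let e_sym := cbip_sym eA.
Let e_irr := cbip_irr eA.
Let e_bip u v : e u v -> (u \in A) != (v \in A). Proof. by rewrite eA. Qed.

Lemma card_edges_cbip : #|edges e| = (#|A| * #|~: A|)%N.
Proof.
by apply/eqP; rewrite -(eqn_pmul2l (isT : 0 < 2)) card_edges_deg // (sum_deg_cbip eA).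
Qed.

Lemma nclose_cbip u v : e u v -> nclose e u v = deg e u.
Proof.
move=> euv; have evu : e v u by rewrite e_sym.
have e_conn : connected_graph e.
  move: euv; rewrite eA /cbip; case: (boolP (u \in A)) => uA vA.
    exact: (connected_cbip eA uA vA).
  exact: (connected_cbip eA (negbNE vA) uA).
(* n_u + n_v = n = deg u + deg v, while n_u >= deg u and n_v >= deg v. *)
have := nclose_addC e_conn e_bip euv.
have := deg_le_nclose e_sym e_irr e_conn e_bip euv.
have := deg_le_nclose e_sym e_irr e_conn e_bip evu.
have : (deg e u + deg e v)%N = n.
  move: euv; rewrite eA /cbip !(deg_cbip eA).
  by case: (u \in A); case: (v \in A) => // _; rewrite ?(addnC #|~: A|) cardsC card_ord.
lia.
Qed.

Lemma cbip_iso_Kbip : #|A| = n./2 -> graph_iso e (Kbip n).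
Proof.
move=> cardA; pose s := enum A ++ enum (~: A).
have s_all u : u \in s by rewrite mem_cat !mem_enum inE orbN.
have index_lt u : index u s < n.
  by rewrite -[n in _ < n]card_ord -(cardsC A) !cardE -size_cat index_mem.
have index_inj : injective (fun u => Ordinal (index_lt u)).
  move=> u v /(congr1 val) /= same_index.
  by rewrite -(nth_index u (s_all u)) same_index nth_index.
have index_half w : (index w s < n./2) = (w \in A).
  rewrite index_cat mem_enum; case: ifP => wA.
    by rewrite -cardA cardE index_mem mem_enum.
  by rewrite -cardE cardA ltnNge leq_addr.
by exists (perm index_inj) => u v; rewrite /Kbip !permE /= eA /cbip !index_half.
Qed.

Local Open Scope ring_scope.

Lemma NGG_cbip (R : rcfType) : NGG R e = Num.sqrt (#|A| * #|~: A|)%N%:R.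
Proof.
set P := (#|A| * #|~: A|)%N.
have term_cbip p : p \in edges e ->
    (Num.sqrt ((nclose e p.1 p.2)%:R * (nclose e p.2 p.1)%:R))^-1 = (Num.sqrt P%:R)^-1 :> R.
  rewrite inE => /andP[_ euv]; have evu : e p.2 p.1 by rewrite e_sym.
  rewrite !nclose_cbip // !(deg_cbip eA) -natrM /P.
  by move: euv; rewrite eA /cbip; case: (_ \in A); case: (_ \in A) => // _; rewrite mulnC.
rewrite /NGG sum_edges (eq_bigr _ term_cbip) sumr_const card_edges_cbip -/P.
have [->|P_gt0] := posnP P; first by rewrite mulr0n sqrtr0.
have s_neq0 : Num.sqrt P%:R != 0 :> R by rewrite sqrtr_eq0 -ltNge ltr0n.
rewrite -(mulr_natr (Num.sqrt P%:R)^-1) -{2}(sqr_sqrtr (ler0n R P)).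
by rewrite expr2 mulKf.
Qed.

End CompleteBipartiteIndices.

Lemma card_edges_gt0 n (e : rel 'I_n) :
  1 < n -> irreflexive e -> connected_graph e -> 0 < #|edges e|.
Proof.
move=> n_gt1 e_irr e_conn; pose z0 := Ordinal (ltnW n_gt1); pose z1 := Ordinal n_gt1.
case/connectP: (e_conn z0 z1) => -[|x p] /=; first by move=> _ /(congr1 val).
case/andP=> ez0x _ _; apply/card_gt0P; exists (z0, x); rewrite inE ez0x andbT lt0n.
by apply: contraTneq ez0x => x0; rewrite (_ : x = z0) ?e_irr //; apply: val_inj.
Qed.

Lemma bipartite_iso_Kbip n (e : rel 'I_n) (A : {set 'I_n}) :
  symmetric e -> irreflexive e -> (forall u v, e u v -> (u \in A) != (v \in A)) ->
  n./2 * (n - n./2) <= #|edges e| -> graph_iso e (Kbip n).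
Proof.
move=> e_sym e_irr e_bip edges_ge.
have A_le : #|A| <= n by rewrite -[n in _ <= n]card_ord max_card.
have edges_eq : #|edges e| = #|A| * #|~: A|.
  apply/eqP; rewrite eqn_leq card_edges_le //=.
  by apply: leq_trans _ edges_ge; rewrite cardsC_ord mul_subn_le_half.
have eA := card_edges_eq e_sym e_irr e_bip edges_eq.
have [cardA|cardA] : #|A| = n./2 \/ #|A| = n - n./2.
  apply: mul_subn_eq_half => //; apply/eqP; rewrite eqn_leq mul_subn_le_half //=.
  by rewrite -cardsC_ord -edges_eq.
- exact: cbip_iso_Kbip eA cardA.
- apply: cbip_iso_Kbip (cbipC eA) _; rewrite cardsC_ord cardA subKn //.
  by have := odd_double_half n; lia.
Qed.

Section CompleteBipartiteBalanced.

Variable n : nat.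
Let L := [set i : 'I_n | i < n./2].

Lemma Kbip_cbip : Kbip n =2 cbip L.
Proof. by move=> u v; rewrite /cbip !inE. Qed.

Lemma Kbip_simple : simple_graph (Kbip n).
Proof. by split=> [|u]; [exact: cbip_sym Kbip_cbip | rewrite (cbip_irr Kbip_cbip)]. Qed.

Lemma Kbip_bipartite : bipartite (Kbip n).
Proof. by exists L => u v; rewrite Kbip_cbip. Qed.

Lemma card_Kbip_low : #|L| = n./2.
Proof. by apply: card_ltn_ord; have := odd_double_half n; lia. Qed.

Lemma Kbip_connected : 1 < n -> connected_graph (Kbip n).
Proof.
move=> n_gt1; have := odd_double_half n => n_halves.
have lo : 0 < n by lia.
have hi : n.-1 < n by lia.
apply: (connected_cbip Kbip_cbip (a := Ordinal lo) (b := Ordinal hi)); rewrite inE /=; lia.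
Qed.

Lemma NGG_Kbip (R : rcfType) : NGG R (Kbip n) = Num.sqrt (n./2 * (n - n./2))%:R.
Proof. by rewrite (NGG_cbip Kbip_cbip) cardsC_ord card_Kbip_low. Qed.

End CompleteBipartiteBalanced.

Local Open Scope ring_scope.

Theorem theorem5 (R : rcfType) (n : nat) : (2 <= n)%N ->
  [/\ simple_graph (Kbip n), connected_graph (Kbip n), bipartite (Kbip n) &
    forall e : rel 'I_n, simple_graph e -> connected_graph e -> bipartite e ->
    [/\ NGG R e <= NGG R (Kbip n),
        GG R e <= GG R (Kbip n),
        NGG R e = NGG R (Kbip n) -> graph_iso e (Kbip n) &
        GG R e = GG R (Kbip n) -> graph_iso e (Kbip n)]].
Proof.
move=> n_ge2; have K_conn := Kbip_connected n_ge2.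
split; [exact: Kbip_simple | exact: K_conn | exact: Kbip_bipartite |].
move=> e [e_sym e_irr'] e_conn [A e_bip]; have e_irr u := negbTE (e_irr' u).
have NGG_le : NGG R e <= NGG R (Kbip n).
  apply: le_trans (NGG_le_sqrt_edges e_sym e_irr e_conn e_bip R) _.
  rewrite NGG_Kbip ler_sqrt ?ler0n // ler_nat.
  apply: leq_trans (card_edges_le e_sym e_irr e_bip) _.
  by rewrite cardsC_ord mul_subn_le_half // -[n in (_ <= n)%N]card_ord max_card.
have NGG_iso : NGG R e = NGG R (Kbip n) -> graph_iso e (Kbip n).
  move=> NGG_eq; apply: (bipartite_iso_Kbip e_sym e_irr e_bip).
  rewrite -(ler_nat R) -ler_sqrt ?ler0n // -NGG_Kbip -NGG_eq.
  exact: NGG_le_sqrt_edges e_sym e_irr e_conn e_bip R.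
have [L L_bip] := Kbip_bipartite n.
rewrite (GG_NGG e_conn e_bip) (GG_NGG K_conn L_bip).
split=> //; first by rewrite ler_wpM2l ?sqrtr_ge0.
move=> GG_eq; have [n_gt2|n_le2] := ltnP 2 n.
  by apply/NGG_iso/(mulfI _ GG_eq); rewrite sqrtr_eq0 -ltNge subr_gt0 ltr_nat.
apply: (bipartite_iso_Kbip e_sym e_irr e_bip).
have -> : (n./2 * (n - n./2) = 1)%N by rewrite (_ : n = 2) //; lia.
exact: card_edges_gt0 n_ge2 e_irr e_conn.
Qed.
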